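(* Let $G=K\rtimes H$ be a Frobenius group with kernel $K$ such that the cardinality of the Frobenius complements is different from $|K|-1$. There is an absolute constant $c>0$ such that for every $0<\varepsilon\le 1/2$ and every $\ell$ with $c\log|K|\log(1/\varepsilon)\le\ell\le|K|$, a uniformly random subset $B\subseteq K$ of size $\ell$ is an $\mathcal{FC}$-strong base (for the action $\circ$) with probability at least $1-\varepsilon$.
   Context: A Frobenius group is a finite group $G$ acting transitively on a finite set such that only the identity has more than one fixed point and some nontrivial element fixes a point; its kernel $K$ (identity plus fixed-point-free elements) is normal, and a Frobenius complement $H$ (a point stabilizer) satisfies $K\cap H=\{1\}$, $G=KH$. The action $\circ$ of $G$ on $K$: for $g=yh$ with $y\in K,h\in H$, $g\circ x=yhxh^{-1}$. $\mathcal{FC}$ is the family of Frobenius complements $\{xHx^{-1}:x\in K\}$ (the stabilizers of the points of $K$). $G_m$ is the stabilizer of $m\in K$. A set $B\subseteq K$ is an $H'$-strong base if $\bigcap_{m\in B}H'G_{g\circ m}=H'$ for every $g\in G$, and an $\mathcal{FC}$-strong base if it is $H'$-strong for every $H'\in\mathcal{FC}$. *)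

From Stdlib Require Import Reals.
From mathcomp Require Import all_boot all_fingroup all_solvable.
Set Implicit Arguments. Unset Strict Implicit. Unset Printing Implicit Defensive.
Local Open Scope group_scope.

Section FrobAct.
Variable gT : finGroupType.
Implicit Types (K H : {group gT}) (g x m : gT) (B : {set gT}).

Definition kpart K H g : gT := odflt 1 [pick y in K | y^-1 * g \in H].
Definition hpart K H g : gT := (kpart K H g)^-1 * g.

(* g o x = y h x h^-1  (note: in MathComp  x ^ z = z^-1 * x * z) *)
Definition frob_act K H g x : gT := kpart K H g * (x ^ (hpart K H g)^-1).

Definition frob_stab (G K H : {group gT}) m : {set gT} :=
  [set g in G | frob_act K H g m == m].

Definition strong_base_for (G K H H' : {group gT}) B : bool :=
  [forall g in G,
     \bigcap_(m in B) ((H' : {set gT}) * frob_stab G K H (frob_act K H g m))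
       == (H' : {set gT})].

(* B is an FC-strong base, FC = { x H x^-1 : x in K } *)
Definition FC_strong_base (G K H : {group gT}) B : bool :=
  [forall x in K, strong_base_for G K H (H :^ x^-1)%G B].

Definition n_good_bases (G K H : {group gT}) (l : nat) : nat :=
  #|[set B : {set gT} | [&& B \subset K, #|B| == l & FC_strong_base G K H B]]|.
End FrobAct.

From Stdlib Require Import Reals Lra Psatz.
From mathcomp Require Import all_boot all_fingroup all_solvable zify.
Set Implicit Arguments. Unset Strict Implicit. Unset Printing Implicit Defensive.

(* The proof is a union bound.  The stabilizer G_m of a point m of K is the
   complement H :^ m^-1, and distinct points have trivially intersecting
   stabilizers, so a nontrivial element of G fixes at most one point of K.
   If B is not (H :^ x^-1)-strong at g, some z in G outside H :^ x^-1 lies in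
   (H :^ x^-1) G_(g o m) for every m in B; for fixed (x, g, z) each such m
   is fixed (after translation by g) by an element of the coset
   (H :^ x^-1) z, whose elements are nontrivial and fix one point each, so
   there are at most |H| such m.  Hence at most |K| |G|^2 C(|H|, l) l-subsets are bad.
   Since |H| divides |K| - 1 and |H| <> |K| - 1, we get 2|H| <= |K|, whence
   2^l C(|H|, l) <= C(|K|, l) and |G| <= |K|^2: the bad proportion is at most
   |K|^5 / 2^l, which is below eps once l >= 32 ln |K| ln (1/eps). *)

Lemma card_bigcup_le (I T : finType) (P : pred I) (F : I -> {set T}) :
  (#|\bigcup_(i | P i) F i| <= \sum_(i | P i) #|F i|)%N.
Proof.
elim/big_rec2: _ => [|i U s _ IH]; first by rewrite cards0.
by rewrite cardsU (leq_trans (leq_subr _ _)) // leq_add2l.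
Qed.

Lemma expn_bin_le k t n l : (k * t <= n)%N -> (k ^ l * 'C(t, l) <= 'C(n, l))%N.
Proof.
elim: l t n => [|l IH] [|t] n le_kt_n; rewrite ?bin0 ?bin0n ?muln0 //.
have le_kt_n1 : (k * t <= n.-1)%N by nia.
rewrite -(leq_pmul2l (ltn0Sn l)) mulnCA -!mul_bin_diag /= expnS mulnACA.
exact: leq_mul (IH _ _ le_kt_n1).
Qed.

Section FrobeniusAction.
Local Open Scope group_scope.
Variables (gT : finGroupType) (G K H : {group gT}).
Hypothesis frobG : [Frobenius G = K ><| H].

Let defG : K ><| H = G := eqP (proj1 (andP frobG)).

Lemma kpartE k h : k \in K -> h \in H -> kpart K H (k * h) = k.
Proof.
move=> Kk Hh; have [_ _ _ _ tiKH] := sdprod_context defG.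
rewrite /kpart; case: pickP => [y /andP[Ky Hykh] | /(_ k)] /=; last first.
  by rewrite Kk mulKg Hh.
have : y^-1 * k \in K :&: H by rewrite inE groupM ?groupV //= -(groupMr _ Hh) -mulgA.
by rewrite tiKH set1gE inE -eq_mulVg1 => /eqP.
Qed.

Lemma hpartE k h : k \in K -> h \in H -> hpart K H (k * h) = h.
Proof. by move=> Kk Hh; rewrite /hpart kpartE // mulKg. Qed.

Lemma frob_actE k h m : k \in K -> h \in H ->
  frob_act K H (k * h) m = k * m ^ h^-1.
Proof. by move=> Kk Hh; rewrite /frob_act kpartE ?hpartE. Qed.

Lemma frob_decomp g : g \in G -> exists2 k, k \in K & exists2 h, h \in H & g = k * h.
Proof.
have [_ _ defKH _ _] := sdprod_context defG.
by rewrite -defKH => /mulsgP[k h Kk Hh ->]; exists k => //; exists h.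
Qed.

Lemma frob_act1 m : frob_act K H 1 m = m.
Proof.
have := frob_actE m (group1 K) (group1 H).
by rewrite mulg1 invg1 conjg1 mul1g.
Qed.

Lemma frob_act_inj g : injective (frob_act K H g).
Proof. by move=> x y; rewrite /frob_act => /mulgI /conjg_inj. Qed.

Lemma frob_act_in g m : g \in G -> m \in K -> frob_act K H g m \in K.
Proof.
move=> /frob_decomp[k Kk [h Hh ->]] Km; have [_ _ _ nKH _] := sdprod_context defG.
by rewrite frob_actE // groupM // memJ_norm // groupV (subsetP nKH).
Qed.

Lemma frob_stabE m : m \in K -> frob_stab G K H m = H :^ m^-1.
Proof.
move=> Km; have [nKG sHG _ nKH _] := sdprod_context defG.
apply/setP => g; rewrite inE; apply/andP/idP => [[/frob_decomp[k Kk [h Hh ->]]] | ].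
  rewrite frob_actE // => /eqP fix_m.
  rewrite (canRL (mulgK _) fix_m).
  suff -> : m * (m ^ h^-1)^-1 * h = h ^ m^-1 by rewrite memJ_conjg.
  by rewrite !conjgE !invgK !invMg invgK !mulgA mulgKV.
case/imsetP=> h Hh ->{g}.
have Km' : m * (m^-1) ^ h^-1 \in K.
  by rewrite groupM // memJ_norm ?groupV // (subsetP nKH).
have -> : h ^ m^-1 = m * (m^-1) ^ h^-1 * h.
  by rewrite !conjgE !invgK !mulgA mulgKV.
split; first exact: groupM (subsetP (normal_sub nKG) _ Km') (subsetP sHG _ Hh).
by rewrite frob_actE // -mulgA -conjMg mulVg conj1g mulg1.
Qed.

(* Distinct points of K have stabilizers meeting trivially: a nontrivial
   element of G fixes at most one point of K. *)
Lemma compl_conj_TI m1 m2 s : m1 \in K -> m2 \in K ->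
  s \in H :^ m1^-1 -> s \in H :^ m2^-1 -> s != 1 -> m1 = m2.
Proof.
move=> Km1 Km2; rewrite !mem_conjg !invgK => Hs1 Hs2 nts.
have [_ _ /normedTI_memJ_P[_ _ tiHG]] := and3P frobG.
have [nKG _ _ _ tiKH] := sdprod_context defG.
have Kd : m1^-1 * m2 \in K by rewrite groupM ?groupV.
have : m1^-1 * m2 \in K :&: H.
  rewrite inE Kd -(tiHG (s ^ m1)) ?(subsetP (normal_sub nKG)) //.
    by rewrite -conjgM mulgA mulgV mul1g !inE Hs2 conjg_eq1 nts.
  by rewrite !inE Hs1 conjg_eq1 nts.
by rewrite tiKH set1gE inE -eq_mulVg1 => /eqP.
Qed.

Lemma card_fixed_le1 g s : g \in G -> s != 1 ->
  #|[set m in K | s \in frob_stab G K H (frob_act K H g m)]| <= 1.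
Proof.
move=> Gg nts; apply/card_le1_eqP => m1 m2 /setIdP[Km1 S1] /setIdP[Km2 S2].
apply: (@frob_act_inj g); apply: (compl_conj_TI _ _ _ _ nts);
  by rewrite ?frob_act_in // -?frob_stabE ?frob_act_in.
Qed.

(* The points m of K with z in L G_(g o m): a set B fails to be L-strong at g
   exactly when B lies in this set for some z outside L. *)
Definition cover_points (L : {set gT}) g z : {set gT} :=
  [set m in K | z \in L * frob_stab G K H (frob_act K H g m)].

(* Each element of the coset L z (all nontrivial when z \notin L) fixes at most
   one point, so few points are covered. *)
Lemma card_cover_points (L : {group gT}) g z : g \in G -> z \notin L ->
  #|cover_points L g z| <= #|L|.
Proof.
move=> Gg nLz.
have sub : cover_points L g z \subset
    \bigcup_(s in L :* z) [set m in K | s \in frob_stab G K H (frob_act K H g m)].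
  apply/subsetP => m; rewrite inE => /andP[Km /mulsgP[l s Ll Ss def_z]].
  apply/bigcupP; exists s; last by rewrite inE Km.
  by rewrite mem_rcoset def_z invMg mulKVg groupV.
rewrite -(card_rcoset L z) -[#|L :* z|]sum1_card.
apply: leq_trans (subset_leq_card sub) (leq_trans (card_bigcup_le _ _) _).
apply: leq_sum => s Lzs; apply: card_fixed_le1 => //; apply: contraNneq nLz => s1.
by move: Lzs; rewrite s1 mem_rcoset mul1g groupV.
Qed.

(* Triples (x, g, z) that may witness the failure of the (H :^ x^-1)-strong
   base property at g. *)
Definition witnesses : {set gT * gT * gT} :=
  [set t | [&& t.1.1 \in K, t.1.2 \in G & t.2 \in G :\: H :^ t.1.1^-1]].

Lemma card_witnesses : #|witnesses| <= #|K| * #|G| * #|G|.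
Proof.
rewrite -!cardsX; apply/subset_leq_card/subsetP => -[[x g] z].
by rewrite !inE /= => /and3P[-> -> /andP[_ ->]].
Qed.

Lemma not_FC_strong_base_cover (B : {set gT}) : B \subset K -> B != set0 ->
  ~~ FC_strong_base G K H B ->
  exists2 t, t \in witnesses & B \subset cover_points (H :^ t.1.1^-1) t.1.2 t.2.
Proof.
move=> sBK /set0Pn[m0 Bm0] /forall_inPn[x Kx] /forall_inPn[g Gg].
have [nKG sHG _ _ _] := sdprod_context defG.
have sHxG : H :^ x^-1 \subset G.
  by rewrite -(conjGid (groupVr (subsetP (normal_sub nKG) x Kx))) conjSg.
have sub_cap : H :^ x^-1 \subset
    \bigcap_(m in B) (H :^ x^-1 * frob_stab G K H (frob_act K H g m)).
  by apply/bigcapsP => m _; apply: mulg_subl; rewrite inE group1 frob_act1 eqxx.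
rewrite /= eqEsubset sub_cap andbT => /subsetPn[z /bigcapP zcap nHz].
have Gz : z \in G.
  have sSG m : frob_stab G K H m \subset G by apply/subsetP => s /setIdP[].
  exact: subsetP (mul_subG sHxG (sSG _)) z (zcap m0 Bm0).
exists (x, g, z); first by rewrite !inE Kx Gg Gz nHz.
by apply/subsetP => m Bm; rewrite inE (subsetP sBK m Bm) zcap.
Qed.

Lemma card_bad_bases l : 0 < l ->
  #|[set B : {set gT} | B \subset K & #|B| == l]
      :\: [set B | FC_strong_base G K H B]|
    <= #|K| * #|G| * #|G| * 'C(#|H|, l).
Proof.
move=> l_gt0.
have sub : [set B : {set gT} | B \subset K & #|B| == l]
      :\: [set B | FC_strong_base G K H B] \subset
    \bigcup_(t in witnesses)
      [set B : {set gT} | B \subset cover_points (H :^ t.1.1^-1) t.1.2 t.2 & #|B| == l].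
  apply/subsetP => B; rewrite !inE => /andP[nFC /andP[sBK /eqP cardB]].
  have nzB : B != set0 by rewrite -card_gt0 cardB.
  have [t Wt sBT] := not_FC_strong_base_cover sBK nzB nFC.
  by apply/bigcupP; exists t; rewrite // inE sBT cardB eqxx.
apply: leq_trans (subset_leq_card sub) (leq_trans (card_bigcup_le _ _) _).
apply: leq_trans (_ : _ <= \sum_(t in witnesses) 'C(#|H|, l)) _.
  apply: leq_sum => -[[x g] z]; rewrite !inE /= => /and3P[_ Gg /andP[nHz _]].
  rewrite cards_draws leq_bin2l // -(cardJg H x^-1).
  exact: (card_cover_points (L := (H :^ x^-1)%G) Gg nHz).
by rewrite sum_nat_const leq_mul2r card_witnesses orbT.
Qed.

(* |H| divides |K| - 1, so unless |H| = |K| - 1 the complement is at most half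
   the kernel. *)
Lemma Frobenius_compl_half : #|H| != #|K|.-1 -> 2 * #|H| <= #|K|.
Proof.
move=> neHK; have [_ ntK _ _ _] := Frobenius_context frobG.
have K_gt1 : 1 < #|K| by rewrite cardG_gt1.
have [q defK1] := dvdnP (Frobenius_dvd_ker1 frobG).
case: q defK1 => [|[|q]] defK1; first by lia.
  by rewrite mul1n in defK1; rewrite defK1 eqxx in neHK.
by lia.
Qed.

Lemma n_good_bases_split l :
  n_good_bases G K H l + #|[set B : {set gT} | B \subset K & #|B| == l]
      :\: [set B | FC_strong_base G K H B]| = 'C(#|K|, l).
Proof.
rewrite -cards_draws -(cardsID [set B | FC_strong_base G K H B]
  [set B : {set gT} | B \subset K & #|B| == l]).
by congr (_ + _); apply: eq_card => B; rewrite !inE andbA.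
Qed.

Lemma bad_bases_bound l : 0 < l -> #|H| != #|K|.-1 ->
  2 ^ l * ('C(#|K|, l) - n_good_bases G K H l) <= #|K| ^ 5 * 'C(#|K|, l).
Proof.
move=> l_gt0 neHK; rewrite -{1}(n_good_bases_split l) addKn.
have cardG : #|G| <= #|K| ^ 2.
  rewrite -(sdprod_card defG) expnS expn1 leq_mul2l.
  by rewrite (leq_trans _ (Frobenius_compl_half neHK)) ?leq_pmull ?orbT.
apply: leq_trans (leq_mul (leqnn _) (card_bad_bases l_gt0)) _.
have -> : (#|K| ^ 5 = #|K| * #|K| ^ 2 * #|K| ^ 2)%N by rewrite -expnS -expnD.
rewrite mulnCA leq_mul ?leq_mul //.
by rewrite expn_bin_le ?Frobenius_compl_half.
Qed.
End FrobeniusAction.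

Local Open Scope R_scope.

Lemma ln_le_ln x y : 0 < x -> x <= y -> ln x <= ln y.
Proof.
by move=> x_gt0 [lt_xy | <-]; [apply/Rlt_le/ln_increasing | apply: Rle_refl].
Qed.

Lemma ln_le_inv x y : 0 < x -> 0 < y -> ln x <= ln y -> x <= y.
Proof.
move=> x_gt0 y_gt0 le_ln; apply: Rnot_lt_le => lt_yx.
exact: Rlt_not_le (ln_increasing _ _ y_gt0 lt_yx) le_ln.
Qed.

Lemma INR_expn m k : INR (m ^ k)%N = INR m ^ k.
Proof. by elim: k => [|k IH]; rewrite ?expn0 // expnS mulnE mult_INR IH. Qed.

Lemma pow2_dominates (n eps : R) (l : nat) : 3 <= n -> 0 < eps -> eps <= / 2 ->
  32 * ln n * ln (/ eps) <= INR l -> n ^ 5 <= eps * 2 ^ l.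
Proof.
move=> n_ge3 eps_gt0 eps_le_half le_l.
have ln_n : 1 <= ln n.
  rewrite -(ln_exp 1); apply: ln_le_ln; first exact: exp_pos.
  exact: Rle_trans exp_le_3 n_ge3.
have ln_eps : / 2 <= ln (/ eps).
  apply: Rle_trans (Rlt_le _ _ ln_lt_2) (ln_le_ln _ _) => //; first lra.
  rewrite -(Rinv_inv 2); apply: Rinv_le_contravar => //.
have n_pos : 0 < n by lra.
have pow2_pos : 0 < 2 ^ l by apply: pow_lt; lra.
apply: ln_le_inv; [exact: pow_lt | exact: Rmult_lt_0_compat |].
rewrite ln_mult ?ln_pow //; last lra.
rewrite -{1}(Rinv_inv eps) ln_Rinv; last exact: Rinv_0_lt_compat.
have five : INR 5 = 5 by simpl; lra.
set a := ln n in ln_n le_l *; set b := ln (/ eps) in ln_eps le_l *.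
have ln2 := ln_lt_2.
have ab_pos : 0 <= a * b by nra.
have l_ln2 : 16 * (a * b) <= INR l * ln 2.
  apply: Rle_trans (Rmult_le_compat_r (ln 2) _ _ _ le_l); nra.
rewrite five; nra.
Qed.

Lemma good_ratio_bound (N C g l : nat) (eps : R) : (0 < C)%N -> (g <= C)%N ->
  (2 ^ l * (C - g) <= N ^ 5 * C)%N -> INR N ^ 5 <= eps * 2 ^ l ->
  INR g / INR C >= 1 - eps.
Proof.
move=> C_gt0 le_gC /leP/le_INR count_bound dominate.
rewrite !mulnE !mult_INR !INR_expn minus_INR in count_bound; last exact/leP.
have C_pos : 0 < INR C by apply/lt_0_INR/leP.
have pow2_pos : 0 < 2 ^ l by apply: pow_lt; lra.
have two : INR 2 = 2 by simpl; lra.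
rewrite two in count_bound.
have : 2 ^ l * (INR C - INR g) <= 2 ^ l * (eps * INR C).
  by apply: Rle_trans count_bound _; nra.
move/(Rmult_le_reg_l _ _ _ pow2_pos) => le_bad.
apply: Rle_ge; apply: (Rmult_le_reg_r (INR C)) => //.
rewrite /Rdiv Rmult_assoc Rinv_l; lra.
Qed.

Theorem proposition3 :
  exists c : R, 0 < c /\
  forall (gT : finGroupType) (G K H : {group gT}),
    [Frobenius G = K ><| H]%g ->
    (#|H| != #|K|.-1)%N ->
    forall (eps : R) (l : nat),
      0 < eps -> eps <= / 2 ->
      c * ln (INR #|K|) * ln (/ eps) <= INR l ->
      (l <= #|K|)%N ->
      INR (n_good_bases G K H l) / INR 'C(#|K|, l) >= 1 - eps.
Proof.
exists 32; split; first lra.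
move=> gT G K H frobG neHK eps l eps_gt0 eps_le_half le_l le_lK.
have [_ _ ntH _ _] := Frobenius_context frobG.
have K_ge3 : 3 <= INR #|K|.
  have : (3 <= #|K|)%N.
    by apply: leq_trans (Frobenius_compl_half frobG neHK); rewrite -cardG_gt1 in ntH; lia.
  by move/leP/le_INR; rewrite [INR 3]/=; lra.
have dominate := pow2_dominates K_ge3 eps_gt0 eps_le_half le_l.
have l_gt0 : (0 < l)%N.
  case: l {le_l le_lK} dominate => [dominate|//]; exfalso.
  have := Rle_pow (INR #|K|) 1 5 ltac:(lra) ltac:(lia).
  by rewrite pow_1 pow_O in dominate *; lra.
apply: good_ratio_bound dominate; first by rewrite bin_gt0 le_lK.
  by rewrite -(n_good_bases_split G K H l) leq_addr.
exact: (bad_bases_bound frobG l_gt0 neHK).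
Qed.
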